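(* Let $n\ge 1$ be an integer, $a>0$, and let $a_0,\dots,a_{n-1}:((-a,a)\setminus\{0\})\times\mathbb{K}\to\mathbb{K}$ be arbitrary functions, where $\mathbb{K}=\mathbb{R}$ or $\mathbb{C}$. Let $f\in C^\infty(-a,a)$ (with values in $\mathbb{K}$) be a solution of $$f^{(n)}(x)+a_{n-1}(x,f(x))f^{(n-1)}(x)+\cdots+a_0(x,f(x))f(x)=0,\qquad x\in(-a,a)\setminus\{0\},$$ satisfying $f(0)=f'(0)=\cdots=f^{(n-1)}(0)=0$. Suppose that $$\limsup_{x\to 0}|x|^{n-k}\,|a_k(x,f(x))|\le \frac1e,\qquad k=0,1,\dots,n-1,$$ where $e$ is Euler's number. Then there exists $\delta>0$ such that $f\equiv 0$ on $[-\delta,\delta]$.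
   Context: The coefficients may be singular at $x=0$; the equation is only required to hold for $x\neq 0$. *)

From Stdlib Require Export Reals Lra.
Open Scope R_scope.

(* Existence of such a D is exactly f = D 0 in C^infty(-a,a),
   with f^(k) = D k on (-a,a). *)
Definition R_derivs (a : R) (D : nat -> R -> R) : Prop :=
  forall (k : nat) (x : R), -a < x < a ->
    derivable_pt_lim (D k) x (D (S k) x).

Fixpoint R_lower_sum (c : nat -> R -> R -> R) (D : nat -> R -> R)
    (x : R) (m : nat) : R :=
  match m with
  | O => 0
  | S m' => R_lower_sum c D x m' + c m' x (D O x) * D m' x
  end.

Definition CC := (R * R)%type.
Definition C0 : CC := (0, 0).
Definition Cadd (z w : CC) : CC := (fst z + fst w, snd z + snd w).
Definition Cmul (z w : CC) : CC :=
  (fst z * fst w - snd z * snd w, fst z * snd w + snd z * fst w).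
Definition Cmod (z : CC) : R := sqrt (fst z ^ 2 + snd z ^ 2).

Definition C_derivs (a : R) (D : nat -> R -> CC) : Prop :=
  forall (k : nat) (x : R), -a < x < a ->
    derivable_pt_lim (fun t => fst (D k t)) x (fst (D (S k) x)) /\
    derivable_pt_lim (fun t => snd (D k t)) x (snd (D (S k) x)).

Fixpoint C_lower_sum (c : nat -> R -> CC -> CC) (D : nat -> R -> CC)
    (x : R) (m : nat) : CC :=
  match m with
  | O => C0
  | S m' => Cadd (C_lower_sum c D x m') (Cmul (c m' x (D O x)) (D m' x))
  end.

From Stdlib Require Import Reals Lra Lia Psatz Factorial.
Open Scope R_scope.

(* Put beta = 1/e + 1/e^2, so that beta * (e - 1) = 1 - 1/e^2 < 1.  The
   limsup hypotheses give a common radius 0 < r < a on which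
   |x|^(n-k) |a_k(x, f(x))| <= beta for 0 < |x| <= r and every k < n.
   Let M be the maximum of |f^(n)| on [-r, r].  Since f^(k)(0) = 0 for
   k < n, the mean value inequality applied n - k times gives
   |f^(k)(x)| <= M |x|^(n-k) / (n-k)!, hence by the equation, for x <> 0,
     |f^(n)(x)| <= sum_k beta M / (n-k)! <= beta (e - 1) M,
   and by continuity also at x = 0.  So M <= beta (e - 1) M, i.e. M = 0,
   and then f vanishes on [-r, r]. *)

Lemma Rabs_le_between x y : Rabs x <= y -> - y <= x <= y.
Proof. unfold Rabs; destruct (Rcase_abs x); lra. Qed.

Fixpoint finsum (f : nat -> R) (m : nat) : R :=
  match m with O => 0 | S m' => finsum f m' + f m' end.

Lemma finsum_le f g m :
  (forall k, (k < m)%nat -> f k <= g k) -> finsum f m <= finsum g m.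
Proof.
  induction m as [|m IH]; simpl; intros H; [lra|].
  assert (f m <= g m) by (apply H; lia).
  assert (finsum f m <= finsum g m) by (apply IH; intros; apply H; lia).
  lra.
Qed.

Lemma finsum_scal c f m : finsum (fun k => c * f k) m = c * finsum f m.
Proof. induction m as [|m IH]; simpl; [ring | rewrite IH; ring]. Qed.

Lemma inv_fact_sum_le_exp n : sum_f_R0 (fun i => / INR (fact i)) n <= exp 1.
Proof.
  unfold exp. destruct (exist_exp 1) as [l Hl]; simpl.
  set (u := fun n => sum_f_R0 (fun i => / INR (fact i) * 1 ^ i) n).
  assert (Hgrow : Un_growing u).
  { intro k. unfold u. rewrite tech5, pow1.
    pose proof (Rinv_0_lt_compat _ (INR_fact_lt_0 (S k))). lra. }
  replace (sum_f_R0 (fun i => / INR (fact i)) n) with (u n).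
  - exact (growing_ineq u l Hgrow Hl n).
  - apply sum_eq. intros. rewrite pow1. ring.
Qed.

Lemma inv_fact_sum_le_exp_minus_1 n :
  finsum (fun k => / INR (fact (n - k))) n <= exp 1 - 1.
Proof.
  assert (Hsplit : forall m, (m <= n)%nat ->
    finsum (fun k => / INR (fact (n - k))) m
      + sum_f_R0 (fun i => / INR (fact i)) (n - m)
    = sum_f_R0 (fun i => / INR (fact i)) n).
  { induction m as [|m IH]; intros Hm; simpl.
    - rewrite Nat.sub_0_r. ring.
    - rewrite <- IH by lia. replace (n - m)%nat with (S (n - S m)) by lia.
      simpl. ring. }
  pose proof (Hsplit n (le_n n)) as H. rewrite Nat.sub_diag in H. simpl in H.
  pose proof (inv_fact_sum_le_exp n). lra.
Qed.

(* The constant that replaces 1/e in the limsup hypotheses. *)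
Definition beta : R := / exp 1 + / (exp 1 * exp 1).

Lemma beta_pos : 0 < beta.
Proof.
  unfold beta. pose proof (exp_pos 1).
  assert (0 < / exp 1) by (apply Rinv_0_lt_compat; lra).
  assert (0 < / (exp 1 * exp 1)) by (apply Rinv_0_lt_compat; nra). lra.
Qed.

Lemma beta_contraction : beta * (exp 1 - 1) < 1.
Proof.
  unfold beta. pose proof (exp_ineq1 1 R1_neq_R0).
  replace ((/ exp 1 + / (exp 1 * exp 1)) * (exp 1 - 1))
    with (1 - / (exp 1 * exp 1)) by (field; lra).
  assert (0 < / (exp 1 * exp 1)) by (apply Rinv_0_lt_compat; nra). lra.
Qed.

Lemma common_radius n (P : nat -> R -> Prop) :
  (forall k eta eta', 0 < eta' <= eta -> P k eta -> P k eta') ->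
  (forall k, (k < n)%nat -> exists eta, 0 < eta /\ P k eta) ->
  exists eta, 0 < eta /\ forall k, (k < n)%nat -> P k eta.
Proof.
  intros Hmono. induction n as [|n IH]; intros H.
  - exists 1. split; [lra | intros; lia].
  - destruct IH as [e1 [He1 P1]]; [intros; apply H; lia|].
    destruct (H n (Nat.lt_succ_diag_r n)) as [e2 [He2 P2]].
    assert (Hmin : 0 < Rmin e1 e2) by (apply Rmin_glb_lt; auto).
    exists (Rmin e1 e2). split; [exact Hmin|].
    intros k Hk. destruct (Nat.eq_dec k n) as [->|Hne].
    + apply (Hmono n e2); [split; [exact Hmin | apply Rmin_r] | exact P2].
    + apply (Hmono k e1); [split; [exact Hmin | apply Rmin_l] | apply P1; lia].
Qed.

(* The limsup hypothesis, with eps = 1/e^2, yields a radius 0 < r < a on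
   which the weighted coefficients are at most beta. *)
Lemma coefficient_radius n a (W : nat -> R -> R) : 0 < a ->
  (forall k, (k < n)%nat -> forall eps, 0 < eps -> exists eta, 0 < eta /\
     forall x, -a < x < a -> 0 < Rabs x < eta -> W k x <= / exp 1 + eps) ->
  exists r, 0 < r /\ r < a /\
    forall k x, (k < n)%nat -> 0 < Rabs x <= r -> W k x <= beta.
Proof.
  intros Ha Hlim.
  assert (Heps : 0 < / (exp 1 * exp 1)).
  { pose proof (exp_pos 1). apply Rinv_0_lt_compat; nra. }
  destruct (common_radius n (fun k eta => forall x, -a < x < a ->
              0 < Rabs x < eta -> W k x <= beta)) as [eta [Heta Hu]].
  - intros k e e' He P x Hx Hx'. apply P; auto; lra.
  - intros k Hk. exact (Hlim k Hk _ Heps).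
  - set (r := Rmin eta a / 2).
    assert (0 < Rmin eta a) by (apply Rmin_glb_lt; auto).
    pose proof (Rmin_l eta a). pose proof (Rmin_r eta a).
    exists r. unfold r. split; [lra | split; [lra|]].
    intros k x Hk Hx. pose proof (Rabs_le_between x _ (proj2 Hx)) as Hx'.
    apply Hu; [exact Hk | lra | lra].
Qed.

Lemma mean_value_ineq (g g' G G' : R -> R) u v : u <= v ->
  (forall t, u <= t <= v -> derivable_pt_lim g t (g' t)) ->
  (forall t, u <= t <= v -> derivable_pt_lim G t (G' t)) ->
  (forall t, u <= t <= v -> Rabs (g' t) <= G' t) ->
  Rabs (g v - g u) <= G v - G u.
Proof.
  intros Huv Hg HG Hb. destruct (Req_dec u v) as [<-|Hne].
  { rewrite !Rminus_diag, Rabs_R0. lra. }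
  assert (Hlt : u < v) by lra.
  destruct (MVT_cor2 (fun t => G t - g t) (fun t => G' t - g' t) u v Hlt)
    as [c1 [E1 H1]].
  { intros c Hc. apply derivable_pt_lim_minus; auto. }
  destruct (MVT_cor2 (fun t => G t + g t) (fun t => G' t + g' t) u v Hlt)
    as [c2 [E2 H2]].
  { intros c Hc. apply derivable_pt_lim_plus; auto. }
  pose proof (Rabs_le_between _ _ (Hb c1 ltac:(lra))).
  pose proof (Rabs_le_between _ _ (Hb c2 ltac:(lra))).
  assert (0 <= (G' c1 - g' c1) * (v - u)) by (apply Rmult_le_pos; lra).
  assert (0 <= (G' c2 + g' c2) * (v - u)) by (apply Rmult_le_pos; lra).
  apply Rabs_le. lra.
Qed.

Lemma INR_fact_S m : INR (fact (S m)) = INR (S m) * INR (fact m).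
Proof. rewrite <- mult_INR. reflexivity. Qed.

(* One Taylor step on [0, x], compared with the primitive
   t |-> C t^(m+1) / (m+1)! of C t^m / m!. *)
Lemma taylor_step_right (g g' : R -> R) C m x : 0 <= x ->
  (forall t, 0 <= t <= x -> derivable_pt_lim g t (g' t)) ->
  (forall t, 0 <= t <= x -> Rabs (g' t) <= C * t ^ m / INR (fact m)) ->
  Rabs (g x - g 0) <= C * x ^ S m / INR (fact (S m)).
Proof.
  intros Hx Hg Hb.
  set (K := C / INR (fact (S m))).
  assert (Hf : 0 < INR (fact m)) by apply INR_fact_lt_0.
  assert (HS : 0 < INR (S m)) by (apply lt_0_INR; lia).
  assert (Hprim : forall t, derivable_pt_lim (fun y => K * y ^ S m) t
                              (C * t ^ m / INR (fact m))).
  { intro t. pose proof (derivable_pt_lim_scal (fun y => y ^ S m) K t _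
                           (derivable_pt_lim_pow t (S m))) as H.
    replace (C * t ^ m / INR (fact m)) with (K * (INR (S m) * t ^ pred (S m)));
      [exact H|].
    unfold K. rewrite INR_fact_S. simpl pred. field. lra. }
  replace (C * x ^ S m / INR (fact (S m))) with (K * x ^ S m - K * 0 ^ S m).
  - apply (mean_value_ineq g g' _ _ 0 x Hx Hg (fun t _ => Hprim t) Hb).
  - unfold K. rewrite pow_i by lia. unfold Rdiv. ring.
Qed.

(* One Taylor step: if g(0) = 0 and |g'(t)| <= C |t|^m / m! on [-r, r],
   then |g(x)| <= C |x|^(m+1) / (m+1)! there.  Negative x reduce to
   positive ones through t |-> g(-t). *)
Lemma taylor_step (g g' : R -> R) r C m :
  (forall t, Rabs t <= r -> derivable_pt_lim g t (g' t)) -> g 0 = 0 ->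
  (forall t, Rabs t <= r -> Rabs (g' t) <= C * Rabs t ^ m / INR (fact m)) ->
  forall x, Rabs x <= r -> Rabs (g x) <= C * Rabs x ^ S m / INR (fact (S m)).
Proof.
  intros Hg Hg0 Hb x Hx.
  destruct (Rle_dec 0 x) as [Hx0|Hx0].
  - rewrite (Rabs_right x) in Hx |- * by lra.
    replace (g x) with (g x - g 0) by (rewrite Hg0; ring).
    apply (taylor_step_right g g'); [exact Hx0 | |].
    + intros t Ht. apply Hg. rewrite Rabs_right; lra.
    + intros t Ht. replace (t ^ m) with (Rabs t ^ m)
        by (rewrite Rabs_right by lra; reflexivity).
      apply Hb. rewrite Rabs_right; lra.
  - rewrite (Rabs_left x) in Hx |- * by lra.
    pose proof (taylor_step_right (comp g (fun t => - t))
                  (fun t => g' (- t) * -1) C m (- x) ltac:(lra)) as H.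
    unfold comp in H. rewrite Ropp_involutive, Ropp_0, Hg0, Rminus_0_r in H.
    apply H.
    + intros t Ht. apply derivable_pt_lim_comp.
      * apply derivable_pt_lim_opp, derivable_pt_lim_id.
      * apply Hg. rewrite Rabs_Ropp, Rabs_right; lra.
    + intros t Ht. replace (Rabs (g' (- t) * -1)) with (Rabs (g' (- t)))
        by (rewrite Rabs_mult, (Rabs_left (-1)) by lra; ring).
      replace (t ^ m) with (Rabs (- t) ^ m)
        by (rewrite Rabs_Ropp, Rabs_right by lra; reflexivity).
      apply Hb. rewrite Rabs_Ropp, Rabs_right; lra.
Qed.

Lemma Cmod_nonneg z : 0 <= Cmod z.
Proof. apply sqrt_pos. Qed.

Lemma Cmod_sq z : Cmod z * Cmod z = fst z ^ 2 + snd z ^ 2.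
Proof. unfold Cmod. apply sqrt_sqrt. nra. Qed.

(* Cauchy-Schwarz: a linear functional of norm <= 1 is bounded by Cmod. *)
Lemma projection_le_Cmod w1 w2 z : w1 ^ 2 + w2 ^ 2 <= 1 ->
  Rabs (w1 * fst z + w2 * snd z) <= Cmod z.
Proof.
  intros Hw. pose proof (Cmod_sq z). pose proof (Cmod_nonneg z).
  destruct z as [x y]; cbn [fst snd] in *. apply Rabs_le.
  assert ((w1 * x + w2 * y) ^ 2 <= Cmod (x, y) ^ 2).
  { pose proof (pow2_ge_0 (w1 * y - w2 * x)). nra. }
  nra.
Qed.

Lemma Cmod_as_projection z : exists w1 w2,
  w1 ^ 2 + w2 ^ 2 <= 1 /\ Cmod z = w1 * fst z + w2 * snd z.
Proof.
  pose proof (Cmod_sq z) as Hsq. set (N := Cmod z) in *.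
  destruct (Req_dec N 0) as [HN|HN].
  - exists 0, 0. split; [lra | rewrite HN; ring].
  - exists (fst z / N), (snd z / N). split.
    + replace ((fst z / N) ^ 2 + (snd z / N) ^ 2)
        with ((fst z ^ 2 + snd z ^ 2) / (N * N)) by (field; exact HN).
      rewrite <- Hsq. right. field. exact HN.
    + replace (fst z / N * fst z + snd z / N * snd z)
        with ((fst z ^ 2 + snd z ^ 2) / N) by (field; exact HN).
      rewrite <- Hsq. field. exact HN.
Qed.

Lemma Cmod_triang z w : Cmod (Cadd z w) <= Cmod z + Cmod w.
Proof.
  destruct (Cmod_as_projection (Cadd z w)) as [w1 [w2 [Hw ->]]].
  pose proof (projection_le_Cmod w1 w2 z Hw).
  pose proof (projection_le_Cmod w1 w2 w Hw).
  pose proof (Rle_abs (w1 * fst z + w2 * snd z)).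
  pose proof (Rle_abs (w1 * fst w + w2 * snd w)).
  unfold Cadd; cbn [fst snd]. lra.
Qed.

Lemma Cmod_mul z w : Cmod (Cmul z w) = Cmod z * Cmod w.
Proof.
  destruct z as [x y], w as [u v]. unfold Cmod, Cmul; cbn [fst snd].
  rewrite <- sqrt_mult by nra. f_equal. ring.
Qed.

Lemma Cmod_opposite z s : Cadd z s = C0 -> Cmod z = Cmod s.
Proof.
  destruct z as [x y], s as [u v]. unfold Cadd, C0; cbn [fst snd].
  intros H. injection H as Hx Hy. unfold Cmod; cbn [fst snd].
  replace x with (- u) by lra. replace y with (- v) by lra. f_equal. ring.
Qed.

Lemma Cmod_eq_0 z : Cmod z = 0 -> z = C0.
Proof.
  destruct z as [x y]. unfold Cmod, C0; cbn [fst snd]. intros H.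
  apply sqrt_eq_0 in H; [|nra].
  assert (x = 0) by nra. assert (y = 0) by nra. subst. reflexivity.
Qed.

Lemma continuity_pt_Cmod (h : R -> CC) t :
  continuity_pt (fun s => fst (h s)) t -> continuity_pt (fun s => snd (h s)) t ->
  continuity_pt (fun s => Cmod (h s)) t.
Proof.
  intros H1 H2.
  change (continuity_pt (comp sqrt (plus_fct
    (comp (fun y => y ^ 2) (fun s => fst (h s)))
    (comp (fun y => y ^ 2) (fun s => snd (h s))))) t).
  assert (Hsq : continuity (fun y : R => y ^ 2))
    by apply derivable_continuous, derivable_pow.
  apply continuity_pt_comp.
  - apply continuity_pt_plus; apply continuity_pt_comp; auto.
  - apply continuity_pt_sqrt. unfold plus_fct, comp. nra.
Qed.

(* The Taylor step for C-valued functions: apply the real one to the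
   projection realising Cmod (h x). *)
Lemma C_taylor_step (h h' : R -> CC) r C m :
  (forall t, Rabs t <= r ->
     derivable_pt_lim (fun s => fst (h s)) t (fst (h' t)) /\
     derivable_pt_lim (fun s => snd (h s)) t (snd (h' t))) ->
  h 0 = C0 ->
  (forall t, Rabs t <= r -> Cmod (h' t) <= C * Rabs t ^ m / INR (fact m)) ->
  forall x, Rabs x <= r -> Cmod (h x) <= C * Rabs x ^ S m / INR (fact (S m)).
Proof.
  intros Hh Hh0 Hb x Hx.
  destruct (Cmod_as_projection (h x)) as [w1 [w2 [Hw ->]]].
  eapply Rle_trans; [apply Rle_abs|].
  apply (taylor_step (fun s => w1 * fst (h s) + w2 * snd (h s))
                     (fun s => w1 * fst (h' s) + w2 * snd (h' s)) r C m); auto.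
  - intros t Ht. destruct (Hh t Ht) as [D1 D2].
    apply (derivable_pt_lim_plus (fun s => w1 * fst (h s))
                                 (fun s => w2 * snd (h s)));
      apply (derivable_pt_lim_scal (fun s => _ (h s))); assumption.
  - rewrite Hh0. unfold C0; cbn [fst snd]. ring.
  - intros t Ht. eapply Rle_trans; [apply projection_le_Cmod; exact Hw|].
    apply Hb, Ht.
Qed.

Lemma le_at_0_by_continuity (f : R -> R) r L : 0 < r -> continuity_pt f 0 ->
  (forall x, 0 < Rabs x <= r -> f x <= L) -> f 0 <= L.
Proof.
  intros Hr Hc Hb. destruct (Rle_dec (f 0) L) as [Hle|Hgt]; [exact Hle|].
  exfalso. destruct (Hc (f 0 - L) ltac:(lra)) as [alp [Halp Hnear]].
  set (y := Rmin (alp / 2) r).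
  assert (0 < y) by (apply Rmin_glb_lt; lra).
  assert (y <= alp / 2) by apply Rmin_l. assert (y <= r) by apply Rmin_r.
  assert (Hy : Rabs y = y) by (apply Rabs_right; lra).
  assert (Hd : Rabs (f y - f 0) < f 0 - L).
  { apply (Hnear y). split; [split; [exact I | lra] |].
    simpl. unfold Rdist. rewrite Rminus_0_r, Hy. lra. }
  pose proof (Hb y ltac:(lra)). apply Rabs_def2 in Hd. lra.
Qed.

(* The heart of the proof, for nonnegative functions F k (standing for
   |f^(k)|) on [-r, r] subject to the one-step Taylor estimate and to the
   inequality coming from the equation. *)
Section Vanishing.

Variables (n : nat) (r : R) (F b : nat -> R -> R).

Hypothesis r_pos : 0 < r.

Hypothesis F_nonneg : forall k x, Rabs x <= r -> 0 <= F k x.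

(* f^(k)(0) = 0 for k < n turns a bound on F (k+1) into one on F k. *)
Hypothesis F_taylor_step : forall k C m, (k < n)%nat ->
  (forall t, Rabs t <= r -> F (S k) t <= C * Rabs t ^ m / INR (fact m)) ->
  forall x, Rabs x <= r -> F k x <= C * Rabs x ^ S m / INR (fact (S m)).

(* The equation: |f^(n)| <= sum_k |a_k| |f^(k)| away from 0. *)
Hypothesis F_equation : forall x, 0 < Rabs x <= r ->
  F n x <= finsum (fun k => b k x * F k x) n.

Hypothesis b_bound : forall k x, (k < n)%nat -> 0 < Rabs x <= r ->
  0 <= b k x /\ Rabs x ^ (n - k) * b k x <= beta.

Hypothesis F_top_continuous : forall t, Rabs t <= r -> continuity_pt (F n) t.

Lemma iterated_taylor_bound M : (forall t, Rabs t <= r -> F n t <= M) ->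
  forall j, (j <= n)%nat -> forall x, Rabs x <= r ->
  F (n - j)%nat x <= M * Rabs x ^ j / INR (fact j).
Proof.
  intros HM. induction j as [|j IH]; intros Hj x Hx.
  - rewrite Nat.sub_0_r. simpl. unfold Rdiv. rewrite Rinv_1, !Rmult_1_r.
    exact (HM x Hx).
  - apply F_taylor_step; [lia | | exact Hx].
    intros t Ht. replace (S (n - S j)) with (n - j)%nat by lia.
    apply IH; [lia | exact Ht].
Qed.

Lemma top_contraction M : 0 <= M -> (forall t, Rabs t <= r -> F n t <= M) ->
  forall x, 0 < Rabs x <= r -> F n x <= beta * (exp 1 - 1) * M.
Proof.
  intros HM0 HM x Hx. eapply Rle_trans; [apply F_equation, Hx|].
  apply Rle_trans with (finsum (fun k => beta * M * / INR (fact (n - k))) n).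
  - apply finsum_le. intros k Hk. destruct (b_bound k x Hk Hx) as [Hb0 Hb1].
    pose proof (iterated_taylor_bound M HM (n - k) ltac:(lia) x ltac:(lra))
      as Hk2.
    replace (n - (n - k))%nat with k in Hk2 by lia.
    pose proof (Rinv_0_lt_compat _ (INR_fact_lt_0 (n - k))).
    apply Rle_trans with (b k x * (M * Rabs x ^ (n - k) / INR (fact (n - k)))).
    + apply Rmult_le_compat_l; assumption.
    + unfold Rdiv.
      replace (b k x * (M * Rabs x ^ (n - k) * / INR (fact (n - k))))
        with (M * / INR (fact (n - k)) * (Rabs x ^ (n - k) * b k x)) by ring.
      replace (beta * M * / INR (fact (n - k)))
        with (M * / INR (fact (n - k)) * beta) by ring.
      apply Rmult_le_compat_l; [nra | exact Hb1].
  - rewrite finsum_scal.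
    replace (beta * (exp 1 - 1) * M) with (beta * M * (exp 1 - 1)) by ring.
    apply Rmult_le_compat_l; [pose proof beta_pos; nra |].
    apply inv_fact_sum_le_exp_minus_1.
Qed.

Theorem F_vanishes : forall x, Rabs x <= r -> F O x <= 0.
Proof.
  destruct (continuity_ab_maj (F n) (- r) r ltac:(lra)) as [t0 [Hmax Ht0]].
  { intros t Ht. apply F_top_continuous, Rabs_le. lra. }
  assert (Ht0r : Rabs t0 <= r) by (apply Rabs_le; lra).
  set (M := F n t0).
  assert (HM : forall t, Rabs t <= r -> F n t <= M)
    by (intros t Ht; apply Hmax, Rabs_le_between, Ht).
  assert (HM0 : 0 <= M) by (apply F_nonneg, Ht0r).
  set (q := beta * (exp 1 - 1)).
  assert (Hq : forall x, Rabs x <= r -> F n x <= q * M).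
  { intros x Hx. destruct (Req_dec x 0) as [->|Hx0].
    - apply (le_at_0_by_continuity (F n) r); [exact r_pos | |].
      + apply F_top_continuous. rewrite Rabs_R0. lra.
      + apply top_contraction; assumption.
    - apply top_contraction; [exact HM0 | exact HM |].
      split; [apply Rabs_pos_lt, Hx0 | exact Hx]. }
  assert (HMzero : M <= 0).
  { pose proof (Hq t0 Ht0r) as Hself. pose proof beta_contraction as Hq1.
    fold q in Hq1. apply (Rmult_le_reg_l (1 - q)); [lra|].
    rewrite Rmult_0_r. fold M in Hself. lra. }
  intros x Hx.
  pose proof (iterated_taylor_bound M HM n (le_n n) x Hx) as Hn.
  rewrite Nat.sub_diag in Hn.
  replace M with 0 in Hn by lra. unfold Rdiv in Hn. lra.
Qed.

End Vanishing.

Lemma R_lower_sum_bound c D x m : Rabs (R_lower_sum c D x m)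
  <= finsum (fun k => Rabs (c k x (D O x)) * Rabs (D k x)) m.
Proof.
  induction m as [|m IH]; simpl; [rewrite Rabs_R0; lra|].
  eapply Rle_trans; [apply Rabs_triang|]. rewrite Rabs_mult. lra.
Qed.

Lemma C_lower_sum_bound c D x m : Cmod (C_lower_sum c D x m)
  <= finsum (fun k => Cmod (c k x (D O x)) * Cmod (D k x)) m.
Proof.
  induction m as [|m IH]; simpl.
  - unfold Cmod, C0; cbn [fst snd]. replace (0 ^ 2 + 0 ^ 2) with 0 by ring.
    rewrite sqrt_0. lra.
  - eapply Rle_trans; [apply Cmod_triang|]. rewrite Cmod_mul. lra.
Qed.

Lemma real_case (n : nat) (a : R) (c : nat -> R -> R -> R) (D : nat -> R -> R) :
  0 < a -> R_derivs a D ->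
  (forall x, -a < x < a -> x <> 0 -> D n x + R_lower_sum c D x n = 0) ->
  (forall k, (k < n)%nat -> D k 0 = 0) ->
  (forall k, (k < n)%nat -> forall eps, 0 < eps -> exists eta, 0 < eta /\
     forall x, -a < x < a -> 0 < Rabs x < eta ->
       Rabs x ^ (n - k) * Rabs (c k x (D O x)) <= / exp 1 + eps) ->
  exists delta, 0 < delta /\ delta < a /\
    forall x, -delta <= x <= delta -> D O x = 0.
Proof.
  intros Ha HD Heq H0 Hlim.
  destruct (coefficient_radius n a _ Ha Hlim) as [r [Hr [Hra Hcoef]]].
  assert (Hin : forall t, Rabs t <= r -> -a < t < a)
    by (intros t Ht; apply Rabs_le_between in Ht; lra).
  exists r. split; [exact Hr | split; [exact Hra|]]. intros x Hx.
  assert (Hvan : Rabs (D O x) <= 0).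
  { apply (F_vanishes n r (fun k t => Rabs (D k t))
                          (fun k t => Rabs (c k t (D O t))));
      [exact Hr | | | | | | apply Rabs_le, Hx].
    - intros k t _. apply Rabs_pos.
    - intros k C m Hk. apply (taylor_step (D k) (D (S k))); [|apply H0, Hk].
      intros t Ht. apply HD, Hin, Ht.
    - intros t Ht. assert (t <> 0) by (intros ->; rewrite Rabs_R0 in Ht; lra).
      replace (D n t) with (- R_lower_sum c D t n)
        by (pose proof (Heq t (Hin t (proj2 Ht)) H); lra).
      rewrite Rabs_Ropp. apply R_lower_sum_bound.
    - intros k t Hk Ht. split; [apply Rabs_pos | apply Hcoef; assumption].
    - intros t Ht. apply (continuity_pt_comp (D n) Rabs); [|apply Rcontinuity_abs].
      apply derivable_continuous_pt. exists (D (S n) t). apply HD, Hin, Ht. }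
  pose proof (Rabs_pos (D O x)). apply Rabs_le_between in Hvan. lra.
Qed.

Lemma complex_case (n : nat) (a : R) (c : nat -> R -> CC -> CC)
    (D : nat -> R -> CC) :
  0 < a -> C_derivs a D ->
  (forall x, -a < x < a -> x <> 0 -> Cadd (D n x) (C_lower_sum c D x n) = C0) ->
  (forall k, (k < n)%nat -> D k 0 = C0) ->
  (forall k, (k < n)%nat -> forall eps, 0 < eps -> exists eta, 0 < eta /\
     forall x, -a < x < a -> 0 < Rabs x < eta ->
       Rabs x ^ (n - k) * Cmod (c k x (D O x)) <= / exp 1 + eps) ->
  exists delta, 0 < delta /\ delta < a /\
    forall x, -delta <= x <= delta -> D O x = C0.
Proof.
  intros Ha HD Heq H0 Hlim.
  destruct (coefficient_radius n a _ Ha Hlim) as [r [Hr [Hra Hcoef]]].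
  assert (Hin : forall t, Rabs t <= r -> -a < t < a)
    by (intros t Ht; apply Rabs_le_between in Ht; lra).
  exists r. split; [exact Hr | split; [exact Hra|]]. intros x Hx.
  assert (Hvan : Cmod (D O x) <= 0).
  { apply (F_vanishes n r (fun k t => Cmod (D k t))
                          (fun k t => Cmod (c k t (D O t))));
      [exact Hr | | | | | | apply Rabs_le, Hx].
    - intros k t _. apply Cmod_nonneg.
    - intros k C m Hk. apply (C_taylor_step (D k) (D (S k))); [|apply H0, Hk].
      intros t Ht. apply HD, Hin, Ht.
    - intros t Ht. assert (t <> 0) by (intros ->; rewrite Rabs_R0 in Ht; lra).
      rewrite (Cmod_opposite _ _ (Heq t (Hin t (proj2 Ht)) H)).
      apply C_lower_sum_bound.
    - intros k t Hk Ht. split; [apply Cmod_nonneg | apply Hcoef; assumption].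
    - intros t Ht. destruct (HD n t (Hin t Ht)) as [D1 D2].
      apply continuity_pt_Cmod; apply derivable_continuous_pt;
        [exists (fst (D (S n) t)) | exists (snd (D (S n) t))]; assumption. }
  apply Cmod_eq_0. pose proof (Cmod_nonneg (D O x)). lra.
Qed.

Theorem theorem1 :
  (* K = R *)
  (forall (n : nat) (a : R) (c : nat -> R -> R -> R) (D : nat -> R -> R),
     (1 <= n)%nat -> 0 < a ->
     R_derivs a D ->
     (forall x, -a < x < a -> x <> 0 -> D n x + R_lower_sum c D x n = 0) ->
     (forall k, (k < n)%nat -> D k 0 = 0) ->
     (* limsup_{x->0} |x|^(n-k) |a_k(x,f(x))| <= 1/e *)
     (forall k, (k < n)%nat -> forall eps, 0 < eps -> exists eta, 0 < eta /\
        forall x, -a < x < a -> 0 < Rabs x < eta ->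
          Rabs x ^ (n - k) * Rabs (c k x (D O x)) <= / exp 1 + eps) ->
     exists delta, 0 < delta /\ delta < a /\
       forall x, -delta <= x <= delta -> D O x = 0)
  /\
  (* K = C *)
  (forall (n : nat) (a : R) (c : nat -> R -> CC -> CC) (D : nat -> R -> CC),
     (1 <= n)%nat -> 0 < a ->
     C_derivs a D ->
     (forall x, -a < x < a -> x <> 0 -> Cadd (D n x) (C_lower_sum c D x n) = C0) ->
     (forall k, (k < n)%nat -> D k 0 = C0) ->
     (forall k, (k < n)%nat -> forall eps, 0 < eps -> exists eta, 0 < eta /\
        forall x, -a < x < a -> 0 < Rabs x < eta ->
          Rabs x ^ (n - k) * Cmod (c k x (D O x)) <= / exp 1 + eps) ->
     exists delta, 0 < delta /\ delta < a /\
       forall x, -delta <= x <= delta -> D O x = C0).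
Proof.
  split.
  - intros n a c D _. apply real_case.
  - intros n a c D _. apply complex_case.
Qed.
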